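(* Fix $c\in\mathcal{C}'$ with $\mathcal{S}(c)\setminus\{c\}\neq\emptyset$, and fix the values of all messages $\lambda_{c'\to s}(\mathbf{x}_s)$ with $c'\neq c$. Consider the function of the block $\boldsymbol\lambda_{c,\mathcal{S}(c)}=(\lambda_{c\to s}(\mathbf{x}_s))_{s\in\mathcal{S}(c)\setminus\{c\},\mathbf{x}_s}$ $$g_c(\boldsymbol\lambda_{c,\mathcal{S}(c)})=\max_{\mathbf{x}_c}\Big[\hat\theta_c(\mathbf{x}_c)-\sum_{s\in\mathcal{S}(c)\setminus\{c\}}\lambda_{c\to s}(\mathbf{x}_s)+\lambda_c(\mathbf{x}_c)\Big]+\sum_{s\in\mathcal{S}(c)\setminus\{c\}}\max_{\mathbf{x}_s}\Big[\hat\theta_s(\mathbf{x}_s)-\gamma_s(\mathbf{x}_s)+\lambda_s^{-c}(\mathbf{x}_s)+\lambda_{c\to s}(\mathbf{x}_s)\Big].$$ For all $s\in\mathcal{S}(c)\setminus\{c\}$ and all $\mathbf{x}_s$ let $$\lambda^*_{c\to s}(\mathbf{x}_s)=-\hat\theta_s(\mathbf{x}_s)+\gamma_s(\mathbf{x}_s)-\lambda_s^{-c}(\mathbf{x}_s)+\frac{1}{|\mathcal{S}(c)\setminus\{c\}|}\max_{\mathbf{x}_{c\setminus s}}\Big[\hat\theta_c(\mathbf{x}_c)+\lambda_c(\mathbf{x}_c)+\sum_{\hat s\in\mathcal{S}(c)\setminus\{c\}}\big(\hat\theta_{\hat s}(\mathbf{x}_{\hat s})-\gamma_{\hat s}(\mathbf{x}_{\hat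 s})+\lambda^{-c}_{\hat s}(\mathbf{x}_{\hat s})\big)\Big].$$ Then $\boldsymbol\lambda^*_{c,\mathcal{S}(c)}=(\lambda^*_{c\to s}(\mathbf{x}_s))_{s\in\mathcal{S}(c)\setminus\{c\},\mathbf{x}_s}$ is a minimiser of $g_c$ (over all real-valued blocks $\boldsymbol\lambda_{c,\mathcal{S}(c)}$).
   Context: Let $\mathcal{V}=\{1,\dots,n\}$; each variable $x_i$ takes values in a finite set $\mathrm{Vals}(X_i)$, and for $s\subseteq\mathcal{V}$ write $\mathbf{x}_s=(x_i)_{i\in s}$. Let $\mathcal{C}$ be a collection of subsets of $\mathcal{V}$ with potentials $\theta_c:\prod_{i\in c}\mathrm{Vals}(X_i)\to\mathbb{R}$, $c\in\mathcal{C}$. Let $\mathcal{C}'$ be a collection of subsets of $\mathcal{V}$ (''extended clusters'') and for each $c\in\mathcal{C}'$ let $\mathcal{S}(c)$ be a collection of subsets of $c$ (possibly containing $c$ itself), such that $\mathcal{C}'\cup\bigcup_{c\in\mathcal{C}'}\mathcal{S}(c)\supseteq\mathcal{C}$. Put $\mathcal{T}=\mathcal{C}'\cup\bigcup_{c\in\mathcal{C}'}\mathcal{S}(c)$. Messages are real numbers $\lambda_{c\to s}(\mathbf{x}_s)$ for $c\in\mathcal{C}'$, $s\in\mathcal{S}(c)\setminus\{c\}$ and all $\mathbf{x}_s$. For $t\in\mathcal{T}$ define $\hat\theta_t(\mathbf{x}_t)=\mathbb{1}(t\in\mathcal{C})\theta_t(\mathbf{x}_t)$, $\gamma_t(\mathbf{x}_t)=\mathbb{1}(t\in\mathcal{C}')\sum_{\hat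 s\in\mathcal{S}(t)\setminus\{t\}}\lambda_{t\to\hat s}(\mathbf{x}_{\hat s})$, $\lambda_t(\mathbf{x}_t)=\sum_{c'\in\mathcal{C}':\,t\in\mathcal{S}(c')\setminus\{c'\}}\lambda_{c'\to t}(\mathbf{x}_t)$. For $c\in\mathcal{C}'$ and $s\in\mathcal{S}(c)\setminus\{c\}$ define $\lambda_s^{-c}(\mathbf{x}_s)=\sum_{\hat c\in\mathcal{C}':\,\hat c\neq c,\ s\in\mathcal{S}(\hat c)\setminus\{\hat c\}}\lambda_{\hat c\to s}(\mathbf{x}_s)$. *)

From HB Require Import structures.
From mathcomp Require Import all_boot all_order all_algebra.
Set Implicit Arguments. Unset Strict Implicit. Unset Printing Implicit Defensive.
Import Order.TTheory GRing.Theory Num.Theory.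
Local Open Scope ring_scope.

(* A configuration x_s of a subset s is represented by a full assignment
   x : asg Vals, and a function of x_s by a function on full assignments that
   depends only on the coordinates in s ("local s f"). *)

Definition asg (n : nat) (Vals : 'I_n -> finType) :=
  {dffun forall i : 'I_n, Vals i}.

Section Defs.
Variables (R : realFieldType) (n : nat) (Vals : 'I_n -> finType).
Local Notation A := (asg Vals).
Local Notation cl := {set 'I_n}.

Definition local (s : cl) (f : A -> R) : Prop :=
  forall x y : A, (forall i, i \in s -> x i = y i) -> f x = f y.

Definition agree (s : cl) (x y : A) : bool := [forall i in s, x i == y i].

(* max of F over the (finite) set of y satisfying P; 0 if that set is empty *)
Definition maxf_in (P : pred A) (F : A -> R) : R :=
  if [pick y | P y] is Some y0 then \big[Num.max/F y0]_(y | P y) F y else 0.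

Definition maxf (F : A -> R) : R := maxf_in predT F.

Variables (C C' : {set cl}) (S : cl -> {set cl}) (theta : cl -> A -> R).

Definition thetahat (t : cl) (x : A) : R := if t \in C then theta t x else 0.

(* messages: lam c s x stands for lambda_{c -> s}(x_s) *)
Definition gamma (lam : cl -> cl -> A -> R) (t : cl) (x : A) : R :=
  if t \in C' then \sum_(sh in S t :\ t) lam t sh x else 0.

Definition lam_in (lam : cl -> cl -> A -> R) (t : cl) (x : A) : R :=
  \sum_(c' in C' | t \in S c' :\ c') lam c' t x.

Definition lam_minus (lam : cl -> cl -> A -> R) (c s : cl) (x : A) : R :=
  \sum_(ch in C' | (ch != c) && (s \in S ch :\ ch)) lam ch s x.

Definition upd (lam : cl -> cl -> A -> R) (c : cl) (blk : cl -> A -> R) :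
  cl -> cl -> A -> R := fun c' s => if c' == c then blk s else lam c' s.

Definition g_c (lam : cl -> cl -> A -> R) (c : cl) (blk : cl -> A -> R) : R :=
  let l := upd lam c blk in
  maxf (fun x => thetahat c x - \sum_(s in S c :\ c) l c s x + lam_in l c x)
  + \sum_(s in S c :\ c)
      maxf (fun x => thetahat s x - gamma l s x + lam_minus l c s x + l c s x).

(* lambda^*_{c -> s}(x_s); the inner max is over x_{c \ s}, i.e. over
   assignments y agreeing with x on s (coordinates outside c are irrelevant) *)
Definition lam_star (lam : cl -> cl -> A -> R) (c : cl) (s : cl) (x : A) : R :=
  - thetahat s x + gamma lam s x - lam_minus lam c s x
  + (#|S c :\ c|%:R)^-1 *
    maxf_in (agree s x)
      (fun y => thetahat c y + lam_in lam c y
         + \sum_(sh in S c :\ c)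
             (thetahat sh y - gamma lam sh y + lam_minus lam c sh y)).

End Defs.

(* Writing g_c(blk) = max_x [h x - sum_s blk_s x] + sum_s max_x [a_s x + blk_s x],
   evaluating every max at a common x shows g_c(blk) >= M := max_x [h x + sum_s a_s x]
   for every block.  The block lam^* shares that maximum equally among the k
   separators: a_s + lam^*_s = (1/k) max_{y agreeing with x on s} (h + sum a), which is
   at most M/k, while h - sum_s lam^*_s = (h + sum a) - (1/k) sum_s (a maximum over a
   set containing x) is at most 0.  Hence g_c is at most M at lam^* itself. *)

From HB Require Import structures.
From mathcomp Require Import all_boot all_order all_algebra.
From mathcomp Require Import ring.
Import Order.TTheory GRing.Theory Num.Theory.
Set Implicit Arguments.
Unset Strict Implicit.
Unset Printing Implicit Defensive.

Local Open Scope ring_scope.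

Section FiniteMax.
Variables (R : realFieldType) (n : nat) (Vals : 'I_n -> finType).
Local Notation A := (asg Vals).

Lemma le_maxf_in (P : pred A) (F : A -> R) y : P y -> F y <= maxf_in P F.
Proof.
move=> Py; rewrite /maxf_in; case: pickP => [y0 Py0|/(_ y)]; last by rewrite Py.
by rewrite (bigD1 y) //= le_max lexx.
Qed.

Lemma maxf_in_le (P : pred A) (F : A -> R) b :
  (exists y, P y) -> (forall y, P y -> F y <= b) -> maxf_in P F <= b.
Proof.
move=> [y Py] Fb; rewrite /maxf_in; case: pickP => [y0 Py0|/(_ y)]; last by rewrite Py.
apply: (big_rec (fun v => v <= b)); first exact: Fb.
by move=> i v Pi vb; rewrite ge_max vb Fb.
Qed.

Lemma eq_maxf_in (P Q : pred A) (F G : A -> R) :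
  P =1 Q -> F =1 G -> maxf_in P F = maxf_in Q G.
Proof.
move=> PQ FG; rewrite /maxf_in (eq_pick PQ); case: pickP => // y0 _.
by rewrite FG; apply: eq_big => // y _; rewrite FG.
Qed.

Lemma agree_refl (s : {set 'I_n}) (x : A) : agree s x x.
Proof. exact/forall_inP. Qed.

Lemma local_maxf_in_agree (s : {set 'I_n}) (F : A -> R) :
  local s (fun x => maxf_in (agree s x) F).
Proof.
move=> x y xy; apply: eq_maxf_in => // z.
by apply: eq_forallb_in => i si; rewrite xy.
Qed.

Lemma asg_inhabited : (forall i, 0 < #|Vals i|)%N -> exists x : A, true.
Proof.
move=> Vals_gt0.
have /fin_all_exists [u _] : forall i, exists v : Vals i, True.
  by move=> i; have /card_gt0P [v _] := Vals_gt0 i; exists v.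
by exists (@finfun _ (fun i => Vals i) u).
Qed.

End FiniteMax.

Section SharedMaximum.
Variables (R : realFieldType) (n : nat) (Vals : 'I_n -> finType).
Local Notation A := (asg Vals).
Local Notation cl := {set 'I_n}.
Variables (K : {set cl}) (h : A -> R) (a : cl -> A -> R).
Hypothesis A_inhabited : exists x : A, true.

Definition block_objective (blk : cl -> A -> R) : R :=
  maxf (fun x => h x - \sum_(s in K) blk s x)
  + \sum_(s in K) maxf (fun x => a s x + blk s x).

Lemma eq_block_objective (blk blk' : cl -> A -> R) :
  (forall s x, s \in K -> blk s x = blk' s x) ->
  block_objective blk = block_objective blk'.
Proof.
move=> eq_blk; congr (_ + _).
  by apply: eq_maxf_in => // x; congr (_ - _); apply: eq_bigr => s /eq_blk->.
by apply: eq_bigr => s Ks; apply: eq_maxf_in => // x; rewrite eq_blk.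
Qed.

Definition joint_potential (x : A) : R := h x + \sum_(s in K) a s x.

Definition shared_block (s : cl) (x : A) : R :=
  - a s x + (#|K|%:R)^-1 * maxf_in (agree s x) joint_potential.

Lemma maxf_joint_le_block_objective blk :
  maxf joint_potential <= block_objective blk.
Proof.
apply: maxf_in_le => [|x _]; first by case: A_inhabited => x _; exists x.
have -> : joint_potential x = (h x - \sum_(s in K) blk s x)
                              + \sum_(s in K) (a s x + blk s x).
  by rewrite /joint_potential big_split /=; ring.
by apply: lerD; [exact: le_maxf_in | apply: ler_sum => s _; exact: le_maxf_in].
Qed.

Hypothesis K_neq0 : K != set0.

Let k_neq0 : (#|K|%:R : R) != 0.
Proof. by rewrite pnatr_eq0 -lt0n card_gt0. Qed.

Let share_sum (v : R) : \sum_(s in K) (#|K|%:R)^-1 * v = v.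
Proof. by rewrite sumr_const -mulrnAr -(mulr_natl v) mulrA mulVf ?mul1r. Qed.

Lemma block_objective_shared_block_le :
  block_objective shared_block <= maxf joint_potential.
Proof.
have A_nonempty : exists x : A, predT x by case: A_inhabited => x _; exists x.
rewrite /block_objective -[leRHS]add0r -(share_sum (maxf joint_potential)).
apply: lerD.
  apply: maxf_in_le => // x _.
  have -> : h x - \sum_(s in K) shared_block s x
      = joint_potential x
        - (#|K|%:R)^-1 * \sum_(s in K) maxf_in (agree s x) joint_potential.
    by rewrite /shared_block big_split /= sumrN -mulr_sumr /joint_potential; ring.
  rewrite subr_le0 -{1}(share_sum (joint_potential x)) -mulr_sumr.
  rewrite ler_wpM2l ?invr_ge0 ?ler0n //.
  by apply: ler_sum => s _; rewrite le_maxf_in ?agree_refl.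
apply: ler_sum => s _; apply: maxf_in_le => // x _.
rewrite /shared_block addrA subrr add0r ler_wpM2l ?invr_ge0 ?ler0n //.
by apply: maxf_in_le => [|y _]; [exists x; exact: agree_refl | exact: le_maxf_in].
Qed.

End SharedMaximum.

Section MessageBlock.
Variables (R : realFieldType) (n : nat) (Vals : 'I_n -> finType).
Local Notation A := (asg Vals).
Local Notation cl := {set 'I_n}.
Variables (C C' : {set cl}) (S : cl -> {set cl}) (theta : cl -> A -> R).
Variables (lam : cl -> cl -> A -> R) (c : cl).

Definition cluster_potential (x : A) : R :=
  thetahat C theta c x + lam_in C' S lam c x.

Definition separator_potential (s : cl) (x : A) : R :=
  thetahat C theta s x - gamma C' S lam s x + lam_minus C' S lam c s x.

Local Notation objective :=
  (block_objective (S c :\ c) cluster_potential separator_potential).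

(* Only the block of messages sent by c is replaced, and none of the messages
   entering lam_in c, gamma s or lam_minus c s is sent by c. *)
Lemma g_c_block_objective blk : g_c C C' S theta lam c blk = objective blk.
Proof.
rewrite /g_c /upd eqxx; congr (_ + _).
  apply: eq_maxf_in => // x; rewrite addrAC; congr (_ + _ - _).
  apply: eq_bigr => c' /andP[_]; rewrite in_setD1 => /andP[cc' _].
  by rewrite eq_sym (negbTE cc').
apply: eq_bigr => s; rewrite in_setD1 => /andP[/negbTE sc _].
apply: eq_maxf_in => // x; congr (_ - _ + _ + _).
  by rewrite /gamma; case: ifP => // _; apply: eq_bigr => sh _; rewrite sc.
by apply: eq_bigr => ch /andP[_ /andP[/negbTE -> _]].
Qed.

Lemma lam_star_shared_block s x :
  lam_star C C' S theta lam c s x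
  = shared_block (S c :\ c) cluster_potential separator_potential s x.
Proof. by rewrite /lam_star /shared_block /separator_potential; ring. Qed.

Hypothesis S_sub : forall c', c' \in C' -> forall s, s \in S c' -> s \subset c'.
Hypothesis theta_local : forall t, t \in C -> local t (theta t).
Hypothesis lam_local :
  forall c', c' \in C' -> forall s, s \in S c' :\ c' -> local s (lam c' s).

Lemma local_thetahat t : local t (thetahat C theta t).
Proof.
by move=> x y xy; rewrite /thetahat; case: ifP => // tC; apply: theta_local.
Qed.

Lemma local_gamma s : local s (gamma C' S lam s).
Proof.
move=> x y xy; rewrite /gamma; case: ifP => // sC'; apply: eq_bigr => sh shS.
apply: (lam_local sC' shS) => i shi; apply: xy.
by move: shS; rewrite in_setD1 => /andP[_ /(S_sub sC')/subsetP]; apply.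
Qed.

Lemma local_lam_minus s : local s (lam_minus C' S lam c s).
Proof.
move=> x y xy; apply: eq_bigr => ch /andP[chC' /andP[_ sS]].
exact: (lam_local chC' sS).
Qed.

Lemma local_lam_star s : local s (lam_star C C' S theta lam c s).
Proof.
move=> x y xy; rewrite /lam_star (local_thetahat xy) (local_gamma xy).
by rewrite (local_lam_minus xy) (local_maxf_in_agree _ xy).
Qed.

End MessageBlock.

Theorem proposition1 (R : realFieldType) (n : nat) (Vals : 'I_n -> finType)
  (C C' : {set {set 'I_n}}) (S : {set 'I_n} -> {set {set 'I_n}})
  (theta : {set 'I_n} -> asg Vals -> R)
  (lam : {set 'I_n} -> {set 'I_n} -> asg Vals -> R) (c : {set 'I_n}) :
  (forall i, 0 < #|Vals i|)%N ->
  (forall c', c' \in C' -> forall s, s \in S c' -> s \subset c') ->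
  C \subset C' :|: \bigcup_(c' in C') S c' ->
  (forall t, t \in C -> local t (theta t)) ->
  (forall c', c' \in C' -> forall s, s \in S c' :\ c' -> local s (lam c' s)) ->
  c \in C' -> S c :\ c != set0 ->
  (forall s, s \in S c :\ c -> local s (lam_star C C' S theta lam c s))
  /\ (forall blk : {set 'I_n} -> asg Vals -> R,
        (forall s, s \in S c :\ c -> local s (blk s)) ->
        g_c C C' S theta lam c (lam_star C C' S theta lam c)
        <= g_c C C' S theta lam c blk).
Proof.
move=> Vals_gt0 S_sub _ theta_local lam_local _ Sc_neq0.
split=> [s _|blk _]; first exact: local_lam_star.
have inh := asg_inhabited Vals_gt0.
rewrite !g_c_block_objective.
rewrite (eq_block_objective _ _
  (fun s x _ => lam_star_shared_block C C' S theta lam c s x)).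
apply: le_trans (block_objective_shared_block_le _ _ inh Sc_neq0) _.
exact: maxf_joint_le_block_objective.
Qed.
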